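(* Consider the central elements $m_\mu=m_\mu(L_1,\dots,L_4)\in\mathbb Z S_4$ for partitions $\mu$ with at most three parts and $|\mu|$ odd (the ''odd monomials''). Such an $m_\mu$ has at least one odd coefficient when expanded in the basis of class sums of $S_4$ if and only if it is one of: (1) $m_i$ for some odd $i\ge1$; (2) $m_{1,1,1}$ (among $\{m_{i,i,i}: i\text{ odd}\}$ only $m_{1,1,1}$ qualifies); (3) $m_{i,i,1}$ for some $i\ge2$ (among $\{m_{i,i,j}: j\text{ odd}, j\ne i\}$ exactly those with $j=1$ qualify); (4) $m_{i+j,i}$ for some $i\ge1$ and odd $j\ge1$. In particular no $m_{k+i+j,k+i,k}$ with $i,j,k\ge1$ and $j+k$ odd has an odd coefficient on any class sum.
   Context: $S_4$ is the symmetric group on $\{1,2,3,4\}$, $\mathbb Z S_4$ its integral group ring, whose centre has $\mathbb Z$-basis the five conjugacy class sums of $S_4$. The Jucys–Murphy elements are $L_1=0$ and $L_i=\sum_{k=1}^{i-1}(k\ i)$ for $i=2,3,4$; they pairwise commute. For a partition $\mu=(\mu_1,\dots,\mu_r)$, $m_\mu(x_1,\dots,x_4)$ is the monomial symmetric polynomial: the sum of all distinct monomials $x_1^{\alpha_1}\cdots x_4^{\alpha_4}$ with $(\alpha_1,\dots,\alpha_4)$ a rearrangement of $(\mu_1,\dots,\mu_r,0,\dots,0)$. A subscript list such as $m_{i,i,1}$ denotes $m_\mu(L_1,\dots,L_4)$ where $\mu$ is the partition whose parts are the listed entries sorted decreasingly. *)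

From HB Require Import structures.
From mathcomp Require Import all_boot all_order all_algebra all_fingroup.
Set Implicit Arguments. Unset Strict Implicit. Unset Printing Implicit Defensive.
Import GRing.Theory Num.Theory.
Local Open Scope ring_scope.

(* The integral group ring Z S_4, elements are finitely supported functions
   'S_4 -> int, i.e. a = \sum_g a(g) g. *)
Definition ZS4 := {ffun 'S_4 -> int}.

Definition gr_one : ZS4 := [ffun g => (g == 1%g)%:Z].

Definition gr_mul (a b : ZS4) : ZS4 :=
  [ffun g => \sum_(h : 'S_4) a h * b (h^-1 * g)%g].

Definition gr_exp (a : ZS4) (n : nat) : ZS4 := iter n (gr_mul a) gr_one.

(* Jucys--Murphy elements L_1..L_4, indexed by i : 'I_4 (i = 0 is L_1 = 0):
   L_i = \sum_{k < i} (k i). *)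
Definition JM (i : 'I_4) : ZS4 :=
  [ffun g => \sum_(k < 4 | (k < i)%N) (g == tperm k i)%:Z].

Definition JM_monomial (al : seq nat) : ZS4 :=
  foldr gr_mul gr_one
    [seq gr_exp (JM i) (nth 0%N al i) | i <- enum 'I_4].

(* m_mu(L_1,...,L_4) for mu with parts a >= b >= c (zeros allowed, at most
   three parts): sum over the distinct rearrangements of (a,b,c,0). *)
Definition m_JM (a b c : nat) : ZS4 :=
  \sum_(al <- undup (permutations [:: a; b; c; 0%N])) JM_monomial al.

(* Coefficient of a (central) element on the class sum of the conjugacy
   class C: the common value of a on C, read at a representative. *)
Definition class_coeff (x : ZS4) (C : {set 'S_4}) : int := x (repr C).

Definition has_odd_class_coeff (x : ZS4) : Prop :=
  exists2 C, C \in classes [set: 'S_4] & odd `|class_coeff x C|%N.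

From mathcomp Require Import all_boot all_order all_algebra all_fingroup.
From mathcomp Require Import zify.

(* Everything is reduced modulo 2: [par x g] is the parity of the coefficient
   of g in x, and reduction modulo 2 commutes with sums and convolution.
   - Computable model.  The relation
     [models v x] is transported along products, powers, sums and the
     Jucys-Murphy elements, so parities of concrete elements are computable.
   - Periodicity.  One computation gives L_i^5 = L_i^3 mod 2, hence L_i^n mod 2
     only depends on [exp_rep n] (n itself if n < 3, else 3 or 4 by parity).
   - Relabelling.  m_mu mod 2 is unchanged when the parts of mu (and the zero
     part) are replaced by values with the same equality pattern and the same
     [exp_rep]; the gap normal form, replacing the gaps c, b - c, a - b by
     their [exp_rep], is such a relabelling and preserves the parity of |mu|
     and the boolean form [listed_shape] of the list (1)-(4).
   - Normal forms have all gaps below 5; for these finitely many triples one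
     computation checks that m_mu is a class function mod 2 and that it has an
     odd coefficient exactly when [listed_shape] holds.
   Since m_mu mod 2 is a class function, an odd class coefficient is the same
   as an odd coefficient at some permutation, which gives the theorem. *)

Set Implicit Arguments.
Unset Strict Implicit.
Unset Printing Implicit Defensive.

Lemma odd_abszD (x y : int) : odd `|(x + y)%R| = odd `|x| (+) odd `|y|.
Proof.
have : (`|(x + y)%R| %% 2 = (`|x| + `|y|) %% 2)%N by lia.
rewrite !modn2 oddD.
by case: (odd `|(x + y)%R|); case: (odd `|x| (+) _).
Qed.

Lemma odd_absz_sum (I : Type) (r : seq I) (F : I -> int) :
  odd `|(\sum_(i <- r) F i)%R| = odd (count (fun i => odd `|F i|) r).
Proof.
elim: r => [|i r IHr]; first by rewrite big_nil.
by rewrite big_cons odd_abszD IHr /= oddD oddb.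
Qed.

Definition par (x : ZS4) (g : 'S_4) : bool := odd `|x g|.

Lemma par_mul (x y : ZS4) (g : 'S_4) :
  par (gr_mul x y) g =
  odd (count (fun h => par x h && par y (h^-1 * g)%g) (enum 'S_4)).
Proof.
rewrite /par ffunE -big_enum odd_absz_sum; congr odd.
by apply: eq_count => h; rewrite abszM oddM.
Qed.

Lemma par_sum (I : Type) (r : seq I) (F : I -> ZS4) (g : 'S_4) :
  par (\sum_(i <- r) F i)%R g = odd (count (fun i => par (F i) g) r).
Proof. by rewrite /par sum_ffunE odd_absz_sum. Qed.

Lemma par_mul_congr (x x' y y' : ZS4) :
  par x =1 par x' -> par y =1 par y' -> par (gr_mul x y) =1 par (gr_mul x' y').
Proof.
by move=> ex ey g; rewrite !par_mul; congr odd; apply: eq_count => h; rewrite ex ey.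
Qed.

(* Encoding S_4 by lists.  [code s] lists the images of 0, 1, 2, 3 under s;
   [pos s] is the position of this code in the list [codes] of the 24
   permutations of [:: 0; 1; 2; 3].  [ccomp p q] composes codes, first p. *)

Definition codes : seq (seq nat) := permutations (iota 0 4).
Definition code (s : 'S_4) : seq nat := [seq val (s i) | i <- enum 'I_4].
Definition ccomp (p q : seq nat) : seq nat := [seq nth 0 q x | x <- p].
Definition pos (s : 'S_4) : nat := index (code s) codes.

Lemma size_codes : size codes = 24.
Proof. by rewrite size_permutations ?iota_uniq. Qed.

Lemma size_code (s : 'S_4) : size (code s) = 4.
Proof. by rewrite size_map size_enum_ord. Qed.

Lemma nth_code (s : 'S_4) (i : 'I_4) : nth 0 (code s) i = s i.
Proof. by rewrite (nth_map i) ?size_enum_ord // nth_ord_enum. Qed.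

Lemma code_inj : injective code.
Proof.
move=> s t est; apply/permP => i; apply: ord_inj.
by rewrite -!nth_code est.
Qed.

Lemma code1 : code 1%g = iota 0 4.
Proof.
apply: (@eq_from_nth _ 0) => [|i]; rewrite ?size_code // => lt_i4.
by rewrite -[i]/(nat_of_ord (Ordinal lt_i4)) nth_code perm1 nth_iota.
Qed.

Lemma code_mul (s t : 'S_4) : code (s * t)%g = ccomp (code s) (code t).
Proof.
apply: (@eq_from_nth _ 0); first by rewrite !size_map.
move=> i; rewrite size_code => lt_i4; pose o := Ordinal lt_i4.
rewrite (nth_map 0) ?size_code // -[i]/(nat_of_ord o).
by rewrite !nth_code permM.
Qed.

Definition tcode (k i : nat) : seq nat :=
  [seq if x == k then i else if x == i then k else x | x <- iota 0 4].

Lemma code_tperm (k i : 'I_4) : code (tperm k i) = tcode k i.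
Proof.
apply: (@eq_from_nth _ 0) => [|x]; rewrite ?size_code ?size_map ?size_iota // => lt_x4.
rewrite (nth_map 0) ?size_iota // nth_iota // add0n.
rewrite -[x]/(nat_of_ord (Ordinal lt_x4)) nth_code.
case: tpermP => [->|->|ne_k ne_i]; rewrite ?eqxx //.
- by case: eqP => [/ord_inj ->|].
- by case: eqP => [/ord_inj/ne_k|_] //; case: eqP => [/ord_inj/ne_i|_].
Qed.

Lemma code_in (s : 'S_4) : code s \in codes.
Proof.
rewrite mem_permutations /code -val_enum_ord (map_comp val s) perm_map //.
apply: uniq_perm => [||i]; rewrite ?(map_inj_uniq (@perm_inj _ s)) ?enum_uniq //.
rewrite mem_enum; apply/mapP; exists (s^-1 i)%g; rewrite ?mem_enum ?permKV //.
Qed.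

Lemma pos_lt (s : 'S_4) : pos s < 24.
Proof. by rewrite -size_codes index_mem code_in. Qed.

Lemma nth_pos (s : 'S_4) : nth [::] codes (pos s) = code s.
Proof. exact/nth_index/code_in. Qed.

Lemma pos_inj : injective pos.
Proof. by move=> s t /(congr1 (nth [::] codes)); rewrite !nth_pos => /code_inj. Qed.

Lemma perm_pos : perm_eq [seq pos s | s <- enum 'S_4] (iota 0 24).
Proof.
have uniq_pos : uniq [seq pos s | s <- enum 'S_4].
  by rewrite (map_inj_uniq pos_inj) enum_uniq.
have sub_pos : {subset [seq pos s | s <- enum 'S_4] <= iota 0 24}.
  by move=> j /mapP [s _ ->]; rewrite mem_iota pos_lt.
have size_pos : size (iota 0 24) <= size [seq pos s | s <- enum 'S_4].
  by rewrite size_iota size_map -cardE card_Sn.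
have [_ eq_pos] := uniq_min_size uniq_pos sub_pos size_pos.
by apply: uniq_perm; [exact: uniq_pos | exact: iota_uniq | exact: eq_pos].
Qed.

Lemma count_pos (P : pred nat) : count P (iota 0 24) = count (P \o pos) (enum 'S_4).
Proof. by rewrite -(seq.permP perm_pos P) count_map. Qed.

Lemma pos_onto (j : nat) : j < 24 -> exists s, pos s = j.
Proof.
move=> lt_j24; have : j \in iota 0 24 by rewrite mem_iota.
by rewrite -(perm_mem perm_pos) => /mapP [s _ ->]; exists s.
Qed.

Definition mul_table : seq (seq nat) :=
  [seq [seq index (ccomp p q) codes | q <- codes] | p <- codes].
Definition mul_at (j k : nat) : nat := nth 0 (nth [::] mul_table j) k.

Lemma mul_at_pos (s t : 'S_4) : mul_at (pos s) (pos t) = pos (s * t)%g.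
Proof.
rewrite /mul_at (nth_map [::]) ?(nth_map [::]) ?size_codes ?pos_lt //.
by rewrite !nth_pos /pos code_mul.
Qed.

(* Entry (j, k) is the position l solving j * l = k, found in row j. *)
Definition ldiv_table : seq (seq nat) :=
  [seq [seq index j row | j <- iota 0 24] | row <- mul_table].
Definition ldiv_at (j k : nat) : nat := nth 0 (nth [::] ldiv_table j) k.

Lemma ldiv_at_pos (h g : 'S_4) : ldiv_at (pos h) (pos g) = pos (h^-1 * g)%g.
Proof.
set row := nth [::] mul_table (pos h).
have size_row : size row = 24.
  by rewrite /row (nth_map [::]) ?size_map ?size_codes ?pos_lt.
have row_g : pos g \in row.
  apply/(nthP 0); exists (pos (h^-1 * g)%g); rewrite ?size_row ?pos_lt //.
  by rewrite -/(mul_at _ _) mul_at_pos mulKVg.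
rewrite /ldiv_at (nth_map [::]) ?size_map ?size_codes ?pos_lt // -/row.
rewrite (nth_map 0) ?size_iota ?pos_lt // nth_iota ?pos_lt // add0n.
have lt_l : index (pos g) row < 24 by rewrite -size_row index_mem.
have [t pos_t] := pos_onto lt_l.
have eq_ht : (h * t)%g = g.
  by apply: pos_inj; rewrite -mul_at_pos pos_t /mul_at nth_index.
by rewrite -pos_t -eq_ht mulKg.
Qed.

Definition models (v : seq bool) (x : ZS4) : Prop :=
  forall g, nth false v (pos g) = par x g.

Definition mmul (u v : seq bool) : seq bool :=
  [seq odd (count (fun k => nth false u k && nth false v (ldiv_at k j)) (iota 0 24))
  | j <- iota 0 24].
Definition mone : seq bool := [seq p == iota 0 4 | p <- codes].
Definition mexp (u : seq bool) (n : nat) : seq bool := iter n (mmul u) mone.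
Definition mvsum (vs : seq (seq bool)) : seq bool :=
  [seq odd (count (fun v => nth false v j) vs) | j <- iota 0 24].
Definition mJM (i : nat) : seq bool :=
  [seq odd (count (fun k => (k < i) && (p == tcode k i)) (iota 0 4)) | p <- codes].

Lemma nth_iota24 (F : nat -> bool) (s : 'S_4) :
  nth false [seq F j | j <- iota 0 24] (pos s) = F (pos s).
Proof. by rewrite (nth_map 0) ?size_iota ?pos_lt // nth_iota ?pos_lt. Qed.

Lemma nth_codes (F : seq nat -> bool) (s : 'S_4) :
  nth false [seq F p | p <- codes] (pos s) = F (code s).
Proof. by rewrite (nth_map [::]) ?size_codes ?pos_lt // nth_pos. Qed.

Lemma models_unique (v : seq bool) (x y : ZS4) :
  models v x -> models v y -> par x =1 par y.
Proof. by move=> mx my g; rewrite -mx my. Qed.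

Lemma models_mul (u v : seq bool) (x y : ZS4) :
  models u x -> models v y -> models (mmul u v) (gr_mul x y).
Proof.
move=> mu mv g; rewrite nth_iota24 par_mul count_pos; congr odd.
by apply: eq_count => h /=; rewrite ldiv_at_pos mu mv.
Qed.

Lemma models_one : models mone gr_one.
Proof.
move=> g; rewrite nth_codes /par ffunE -code1 (inj_eq code_inj).
by case: (g == 1%g).
Qed.

Lemma models_exp (u : seq bool) (x : ZS4) (n : nat) :
  models u x -> models (mexp u n) (gr_exp x n).
Proof. by move=> mu; elim: n => [|n IHn]; [exact: models_one | exact: models_mul]. Qed.

Lemma models_foldr (I : Type) (r : seq I) (F : I -> seq bool) (G : I -> ZS4) :
  (forall i, models (F i) (G i)) ->
  models (foldr mmul mone [seq F i | i <- r]) (foldr gr_mul gr_one [seq G i | i <- r]).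
Proof. by move=> mFG; elim: r => [|i r IHr]; [exact: models_one | exact: models_mul]. Qed.

Lemma models_sum (I : Type) (r : seq I) (F : I -> seq bool) (G : I -> ZS4) :
  (forall i, models (F i) (G i)) ->
  models (mvsum [seq F i | i <- r]) (\sum_(i <- r) G i)%R.
Proof.
move=> mFG g; rewrite nth_iota24 par_sum count_map; congr odd.
by apply: eq_count => i; rewrite /= mFG.
Qed.

Lemma models_JM (i : 'I_4) : models (mJM i) (JM i).
Proof.
move=> g; rewrite nth_codes /par ffunE big_mkcond -big_enum odd_absz_sum.
rewrite -val_enum_ord count_map; congr odd; apply: eq_count => k /=.
rewrite -code_tperm (inj_eq code_inj).
by case: (k < i); case: (g == tperm k i).
Qed.

(* Eventual 2-periodicity of the powers of L_i modulo 2.  [exp_rep n] is the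
   representative of n for the equivalence n ~ n + 2 on exponents n >= 3. *)

Definition exp_rep (n : nat) : nat := if n < 3 then n else 3 + (n - 3) %% 2.

Lemma exp_rep_spec (n : nat) :
  (n < 3 /\ exp_rep n = n) \/ (3 <= n /\ exp_rep n = 3 + (n - 3) %% 2).
Proof. by rewrite /exp_rep; case: ltnP; [left | right]. Qed.

Lemma exp_rep_lt5 (n : nat) : exp_rep n < 5.
Proof. by have := exp_rep_spec n; lia. Qed.

Lemma par_exp_period (x : ZS4) :
  par (gr_exp x 5) =1 par (gr_exp x 3) ->
  forall n, par (gr_exp x n) =1 par (gr_exp x (exp_rep n)).
Proof.
move=> period.
have shift2 n : 3 <= n -> par (gr_exp x (n + 2)) =1 par (gr_exp x n).
  elim: n => // n IHn; rewrite leq_eqVlt => /predU1P [<- // | le3n].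
  by rewrite addSn; apply: par_mul_congr => //; exact: IHn.
elim/ltn_ind=> n IHn g.
have [lt_n5 | le5n] := ltnP n 5.
  by have -> : exp_rep n = n by have := exp_rep_spec n; lia.
have -> : exp_rep n = exp_rep (n - 2).
  by have := exp_rep_spec n; have := exp_rep_spec (n - 2); lia.
rewrite -(IHn (n - 2)); last by lia.
have n_eq : n = n - 2 + 2 by lia.
by rewrite {1}n_eq; apply: shift2; lia.
Qed.

Lemma JM_period_model : all (fun i => mexp (mJM i) 5 == mexp (mJM i) 3) (iota 0 4).
Proof. by vm_compute. Qed.

Lemma par_JM_exp_rep (i : 'I_4) (n : nat) :
  par (gr_exp (JM i) n) =1 par (gr_exp (JM i) (exp_rep n)).
Proof.
apply: par_exp_period.
have /eqP eq53 : mexp (mJM i) 5 == mexp (mJM i) 3.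
  by apply: (allP JM_period_model); rewrite mem_iota ltn_ord.
have m5 := models_exp 5 (models_JM i); rewrite eq53 in m5.
exact: models_unique m5 (models_exp 3 (models_JM i)).
Qed.

(* Powers are read off a table of the
   first five powers, which is legitimate by periodicity. *)

Definition m_sym (s : seq nat) : ZS4 :=
  (\sum_(al <- undup (permutations s)) JM_monomial al)%R.

Definition pow_table : seq (seq (seq bool)) :=
  [seq mkseq (mexp (mJM i)) 5 | i <- iota 0 4].
Definition mpow (i n : nat) : seq bool := nth [::] (nth [::] pow_table i) (exp_rep n).
Definition mmono (al : seq nat) : seq bool :=
  foldr mmul mone [seq mpow i (nth 0 al i) | i <- iota 0 4].
Definition mvec (s : seq nat) : seq bool :=
  mvsum [seq mmono al | al <- undup (permutations s)].

Lemma models_pow (i : 'I_4) (n : nat) : models (mpow i n) (gr_exp (JM i) n).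
Proof.
move=> g; rewrite /mpow (nth_map 0) ?size_iota ?ltn_ord // nth_iota ?ltn_ord //.
by rewrite nth_mkseq ?exp_rep_lt5 // (models_exp _ (models_JM i)) -par_JM_exp_rep.
Qed.

Lemma models_mono (al : seq nat) : models (mmono al) (JM_monomial al).
Proof.
rewrite /mmono /JM_monomial -val_enum_ord -map_comp.
by apply: models_foldr => i; exact: models_pow.
Qed.

Lemma models_m_sym (s : seq nat) : models (mvec s) (m_sym s).
Proof. exact: models_sum models_mono. Qed.

Lemma par_monomial_rep (al al' : seq nat) :
  (forall i, i < 4 -> exp_rep (nth 0 al i) = exp_rep (nth 0 al' i)) ->
  par (JM_monomial al) =1 par (JM_monomial al').
Proof.
move=> eq_rep; apply: (models_unique (models_mono al)).
have -> : mmono al = mmono al'.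
  rewrite /mmono /mpow; congr foldr; apply/eq_in_map => i.
  by rewrite mem_iota => /andP [_ lt_i4]; rewrite eq_rep.
exact: models_mono.
Qed.

(* Class functions.  [mcentral v] checks v(jk) = v(kj) for all j, k, i.e.
   that v is constant on conjugacy classes. *)

Definition mcentral (v : seq bool) : bool :=
  all (fun j => all (fun k => nth false v (mul_at j k) == nth false v (mul_at k j))
                    (iota 0 24)) (iota 0 24).

Lemma models_central (v : seq bool) (x : ZS4) :
  models v x -> mcentral v -> forall g h, par x (g * h)%g = par x (h * g)%g.
Proof.
move=> mv central_v g h; rewrite -!mv -!mul_at_pos.
have /allP /(_ (pos h)) :
    all (fun k => nth false v (mul_at (pos g) k) == nth false v (mul_at k (pos g)))
        (iota 0 24).
  by apply: (allP central_v); rewrite mem_iota pos_lt.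
by rewrite mem_iota pos_lt => /(_ isT) /eqP.
Qed.

Lemma models_has (v : seq bool) (x : ZS4) :
  models v x -> reflect (exists g, par x g) (has (nth false v) (iota 0 24)).
Proof.
move=> mv; rewrite has_count count_pos -has_count.
apply: (iffP hasP) => [[g _ /=] | [g odd_g]]; first by rewrite mv; exists g.
by exists g; rewrite ?mem_enum //= mv.
Qed.

Lemma has_odd_class_coeffP (x : ZS4) :
  (forall g h, par x (g * h)%g = par x (h * g)%g) ->
  has_odd_class_coeff x <-> exists g, par x g.
Proof.
move=> central; split => [[C _ odd_C] | [g odd_g]]; first by exists (repr C).
exists (g ^: [set: 'S_4])%g; first exact/mem_classes/in_setT.
have : (repr (g ^: [set: 'S_4]) \in g ^: [set: 'S_4])%g.
  by apply: (mem_repr g); exact: (class_refl [set: 'S_4]%G).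
rewrite /class_coeff; case/imsetP => h _ ->.
by rewrite conjgE -/(par x _) central mulgK.
Qed.

Definition same_pattern (s s' : seq nat) : Prop :=
  size s = size s' /\
  forall i j, i < size s -> j < size s ->
    (nth 0 s i == nth 0 s j) = (nth 0 s' i == nth 0 s' j).

Definition relabel (s s' : seq nat) (x : nat) : nat := nth 0 s' (index x s).

Lemma same_pattern_sym (s s' : seq nat) : same_pattern s s' -> same_pattern s' s.
Proof. by case=> eq_size eq_pat; split=> // i j; rewrite -eq_size => *; rewrite eq_pat. Qed.

Lemma relabel_nth (s s' : seq nat) (i : nat) :
  same_pattern s s' -> i < size s -> relabel s s' (nth 0 s i) = nth 0 s' i.
Proof.
case=> _ eq_pat lt_i; set j := index (nth 0 s i) s.
have lt_j : j < size s by rewrite index_mem mem_nth.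
by apply/eqP; rewrite -eq_pat ?nth_index ?mem_nth.
Qed.

Lemma relabel_map (s s' : seq nat) : same_pattern s s' -> map (relabel s s') s = s'.
Proof.
move=> pat; have [eq_size _] := pat.
apply: (@eq_from_nth _ 0); rewrite size_map // => i lt_i.
by rewrite (nth_map 0) // relabel_nth.
Qed.

Lemma relabelK (s s' : seq nat) :
  same_pattern s s' -> {in s, cancel (relabel s s') (relabel s' s)}.
Proof.
move=> pat x /(nthP 0) [i lt_i <-]; have [eq_size _] := pat.
rewrite (relabel_nth pat lt_i) (relabel_nth (same_pattern_sym pat)) //.
by rewrite -eq_size.
Qed.

Lemma perm_permutations_relabel (s s' : seq nat) : same_pattern s s' ->
  perm_eq (permutations s') [seq map (relabel s s') t | t <- permutations s].
Proof.
move=> pat; have pat' := same_pattern_sym pat.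
set f := relabel s s'; set g := relabel s' s.
have mapK (u : seq nat) : perm_eq u s -> map g (map f u) = u.
  move=> eq_us; rewrite -map_comp map_id_in // => y.
  by rewrite (perm_mem eq_us) => /(relabelK pat).
apply: uniq_perm; rewrite ?permutations_uniq //.
  rewrite map_inj_in_uniq ?permutations_uniq // => t u.
  rewrite !mem_permutations => eq_ts eq_us eq_ftu.
  by rewrite -(mapK t eq_ts) eq_ftu mapK.
move=> t; rewrite mem_permutations; apply/idP/mapP => [eq_ts' | [u]].
  exists (map g t); first by rewrite mem_permutations -(relabel_map pat') perm_map.
  rewrite -map_comp map_id_in // => y.
  by rewrite (perm_mem eq_ts') => /(relabelK pat').
by rewrite mem_permutations => eq_us ->; rewrite -(relabel_map pat) perm_map.
Qed.

Lemma par_m_sym_relabel (s s' : seq nat) :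
  size s = 4 -> same_pattern s s' ->
  (forall i, i < 4 -> exp_rep (nth 0 s' i) = exp_rep (nth 0 s i)) ->
  par (m_sym s') =1 par (m_sym s).
Proof.
move=> size4 pat rep_eq g.
have rep_relabel x : x \in s -> exp_rep (relabel s s' x) = exp_rep x.
  by move=> /(nthP 0) [i lt_i <-]; rewrite (relabel_nth pat lt_i) rep_eq -?size4.
rewrite /m_sym !par_sum !undup_id ?permutations_uniq //.
rewrite (seq.permP (perm_permutations_relabel pat)) count_map; congr odd.
apply: eq_in_count => t; rewrite mem_permutations => eq_ts /=.
apply: par_monomial_rep => i lt_i4.
have lt_i : i < size t by rewrite (perm_size eq_ts) size4.
by rewrite (nth_map 0) // rep_relabel // -(perm_mem eq_ts) mem_nth.
Qed.

Definition listed_shape (a b c : nat) : bool :=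
  [|| (b == 0) && (c == 0), [&& a == 1, b == 1 & c == 1],
      [&& a == b, 2 <= b & c == 1] | [&& c == 0, 0 < b, b < a & odd (a - b)]].

Lemma listed_shapeP (a b c : nat) : c <= b <= a ->
  reflect [\/ b = 0 /\ c = 0,
              a = 1 /\ b = 1 /\ c = 1,
              exists2 i, 2 <= i & (a = i /\ b = i /\ c = 1)
            | exists i j, [/\ 1 <= i, 1 <= j, odd j & (a = i + j /\ b = i /\ c = 0)]]
    (listed_shape a b c).
Proof.
move=> sorted; apply: (iffP idP).
  case/or4P => [/andP [/eqP -> /eqP ->] | /and3P [/eqP -> /eqP -> /eqP ->]
              | /and3P [/eqP -> le2b /eqP ->] | /and4P [/eqP -> lt0b lt_ba odd_ab]].
  - exact: Or41.
  - exact: Or42.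
  - by apply: Or43; exists b.
  - by apply: Or44; exists b, (a - b); split=> //; lia.
case=> [[-> ->] | [-> [-> ->]] | [i le2i [-> [-> ->]]]
       | [i [j [le1i le1j odd_j [-> [-> ->]]]]]] //.
- by rewrite /listed_shape le2i !eqxx !orbT.
- by rewrite /listed_shape addKn odd_j; lia.
Qed.

Lemma exp_rep_addr (u v d : nat) :
  exp_rep u = exp_rep v -> exp_rep (u + exp_rep d) = exp_rep (v + d).
Proof.
have := exp_rep_spec u; have := exp_rep_spec v; have := exp_rep_spec d.
have := exp_rep_spec (u + exp_rep d); have := exp_rep_spec (v + d); lia.
Qed.

Section GapNormalForm.
Variables a b c : nat.
Hypothesis sorted : c <= b <= a.

Let c' := exp_rep c.
Let b' := c' + exp_rep (b - c).
Let a' := b' + exp_rep (a - b).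

Lemma gap_nf_pattern : same_pattern [:: a; b; c; 0] [:: a'; b'; c'; 0].
Proof.
split=> // i j; rewrite /a' /b' /c'.
have := exp_rep_spec c; have := exp_rep_spec (b - c); have := exp_rep_spec (a - b).
by case: i => [|[|[|[|i]]]]; case: j => [|[|[|[|j]]]] //=; lia.
Qed.

Lemma gap_nf_rep (i : nat) : i < 4 ->
  exp_rep (nth 0 [:: a'; b'; c'; 0] i) = exp_rep (nth 0 [:: a; b; c; 0] i).
Proof.
have [le_cb le_ba] := andP sorted.
have rep_c : exp_rep c' = exp_rep c.
  by have := exp_rep_addr c (erefl (exp_rep 0)); rewrite !add0n.
have rep_b : exp_rep b' = exp_rep b by rewrite /b' (exp_rep_addr _ rep_c) subnKC.
have rep_a : exp_rep a' = exp_rep a by rewrite /a' (exp_rep_addr _ rep_b) subnKC.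
by case: i => [|[|[|[|i]]]].
Qed.

Lemma gap_nf_odd : odd (a' + b' + c') = odd (a + b + c).
Proof.
rewrite /a' /b' /c'.
have := exp_rep_spec c; have := exp_rep_spec (b - c); have := exp_rep_spec (a - b); lia.
Qed.

Lemma gap_nf_listed_shape : listed_shape a' b' c' = listed_shape a b c.
Proof.
rewrite /listed_shape /a' /b' /c'.
have := exp_rep_spec c; have := exp_rep_spec (b - c); have := exp_rep_spec (a - b) => *.
congr [|| _ && _, [&& _, _ & _], [&& _, _ & _] | [&& _, _, _ & _]]; lia.
Qed.
End GapNormalForm.

(* The finite verification over all gap normal forms: gaps c, d, e < 5. *)
Definition normal_form_ok (a b c : nat) : bool :=
  let v := mvec [:: a; b; c; 0] in
  mcentral v && (has (nth false v) (iota 0 24) == listed_shape a b c).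

Lemma normal_forms_ok :
  all (fun c => all (fun d => all (fun e =>
      odd (c + d + e + (c + d) + c) ==> normal_form_ok (c + d + e) (c + d) c)
    (iota 0 5)) (iota 0 5)) (iota 0 5).
Proof. by vm_compute. Qed.

Lemma m_JM_odd_iff (a b c : nat) : c <= b <= a -> odd (a + b + c) ->
  has_odd_class_coeff (m_JM a b c) <-> listed_shape a b c.
Proof.
move=> sorted odd_abc.
set c' := exp_rep c; set b' := c' + exp_rep (b - c); set a' := b' + exp_rep (a - b).
have par_eq : par (m_sym [:: a'; b'; c'; 0]) =1 par (m_JM a b c).
  exact: (par_m_sym_relabel (s := [:: a; b; c; 0]) erefl
            (gap_nf_pattern sorted) (gap_nf_rep sorted)).
have /andP [central_v /eqP has_v] : normal_form_ok a' b' c'.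
  have in5 n : exp_rep n \in iota 0 5 by rewrite mem_iota exp_rep_lt5.
  move: (allP normal_forms_ok _ (in5 c)) => /allP /(_ _ (in5 (b - c))).
  move=> /allP /(_ _ (in5 (a - b))) /implyP; apply.
  by rewrite (gap_nf_odd sorted).
have mv := models_m_sym [:: a'; b'; c'; 0].
rewrite has_odd_class_coeffP => [|g h]; last by rewrite -!par_eq (models_central mv).
rewrite -(gap_nf_listed_shape sorted) -has_v.
split=> [[g odd_g] | /(models_has mv) [g odd_g]].
  by apply/(models_has mv); exists g; rewrite par_eq.
by exists g; rewrite -par_eq.
Qed.

Theorem lemma3p3 :
  (forall a b c : nat, (c <= b <= a)%N -> odd (a + b + c) ->
     (has_odd_class_coeff (m_JM a b c) <->
       [\/ b = 0%N /\ c = 0%N,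
           a = 1%N /\ b = 1%N /\ c = 1%N,
           exists2 i, (2 <= i)%N & (a = i /\ b = i /\ c = 1%N)
         | exists i j, [/\ (1 <= i)%N, (1 <= j)%N, odd j
                          & (a = i + j /\ b = i /\ c = 0%N)%N]]))
  /\
  (forall i j k : nat, (1 <= i)%N -> (1 <= j)%N -> (1 <= k)%N -> odd (j + k) ->
     ~ has_odd_class_coeff (m_JM (k + i + j) (k + i) k)).
Proof.
split=> [a b c sorted odd_abc | i j k le1i le1j le1k odd_jk].
  by rewrite m_JM_odd_iff //; exact: iff_sym (rwP (listed_shapeP sorted)).
rewrite m_JM_odd_iff ?leq_addr //; last by lia.
by rewrite /listed_shape; lia.
Qed.
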